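(* Let $(\sqrt5-1)/4<\alpha<1/2$. If $(x,y)\in A_1$ and $G_\alpha(x,y)\in A_2$, then $G_\alpha^2(x,y)\in A_2$; i.e., a point entering $A_2$ from $A_1$ stays in $A_2$ for at least two steps.
   Context: Let $\tau:[0,1]\to[0,1]$ be the symmetric tent map, $\tau(x)=2x$ for $0\le x<1/2$ and $\tau(x)=2-2x$ for $1/2\le x\le 1$. For $0<\alpha<1$ define $G_\alpha:[0,1]^2\to[0,1]^2$ by $G_\alpha(x,y)=(y,\tau(\alpha y+(1-\alpha)x))$. Let $S(x,y)=\alpha y+(1-\alpha)x$, $A_1=\{(x,y)\in[0,1]^2: S(x,y)<1/2\}$ and $A_2=\{(x,y)\in[0,1]^2: S(x,y)\ge 1/2\}$. *)

From Stdlib Require Import Reals.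
Open Scope R_scope.

Definition tent (x : R) : R := if Rlt_dec x (1/2) then 2 * x else 2 - 2 * x.

Definition Sfun (a x y : R) : R := a * y + (1 - a) * x.

Definition G (a : R) (p : R * R) : R * R :=
  (snd p, tent (Sfun a (fst p) (snd p))).

Definition in_square (p : R * R) : Prop :=
  0 <= fst p <= 1 /\ 0 <= snd p <= 1.

Definition regA1 (a : R) (p : R * R) : Prop :=
  in_square p /\ Sfun a (fst p) (snd p) < 1/2.

Definition regA2 (a : R) (p : R * R) : Prop :=
  in_square p /\ Sfun a (fst p) (snd p) >= 1/2.

(** On [A_1] the tent map doubles, so [G(x,y) = (y, z)] with [z = 2 S(x,y) >= 2 alpha y].
    Entering [A_2] the tent map folds, and the value of [S] at the second iterate
    is [2 alpha + (1 - alpha - 2 alpha^2) z - 2 alpha (1 - alpha) y]. Bounding [y] by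
    [z / (2 alpha)] when [z <= 2 alpha] and by [1] otherwise gives in both cases the
    lower bound [2 alpha - 4 alpha^3], and
    [2 alpha - 4 alpha^3 - 1/2 = (1 - 2 alpha)(4 alpha^2 + 2 alpha - 1) / 2]
    is positive exactly between the roots [(sqrt 5 - 1)/4] and [1/2]. *)

From Stdlib Require Import Reals Lra Psatz.
Open Scope R_scope.

Lemma tent_lt_half (t : R) : t < 1/2 -> tent t = 2 * t.
Proof. intros Ht; unfold tent; destruct (Rlt_dec t (1/2)); lra. Qed.

Lemma tent_ge_half (t : R) : t >= 1/2 -> tent t = 2 - 2 * t.
Proof. intros Ht; unfold tent; destruct (Rlt_dec t (1/2)); lra. Qed.

Lemma Sfun_bounds (a x y : R) :
  0 <= a <= 1 -> 0 <= x <= 1 -> 0 <= y <= 1 -> 0 <= Sfun a x y <= 1.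
Proof. unfold Sfun; intros; split; nra. Qed.

Lemma golden_quadratic_pos (a : R) : (sqrt 5 - 1) / 4 < a -> 0 < 4 * a^2 + 2 * a - 1.
Proof.
  intros Ha.
  assert (Hs : sqrt 5 * sqrt 5 = 5) by (apply sqrt_sqrt; lra).
  pose proof (sqrt_pos 5).
  nra.
Qed.

Lemma cubic_gt_half (a : R) : (sqrt 5 - 1) / 4 < a -> a < 1/2 -> 1/2 < 2 * a - 4 * a^3.
Proof.
  intros Ha Ha2; pose proof (golden_quadratic_pos a Ha).
  assert (Hfactor : 2 * a - 4 * a^3 - 1/2 = (1 - 2 * a) * (4 * a^2 + 2 * a - 1) / 2) by field.
  nra.
Qed.

Lemma second_iterate_lower_bound (a y z : R) :
  0 < a < 1/2 -> 0 <= y <= 1 -> 2 * a * y <= z ->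
  2 * a - 4 * a^3 <= Sfun a z (2 - 2 * Sfun a y z).
Proof.
  intros Ha Hy Hz; unfold Sfun.
  destruct (Rle_lt_dec z (2 * a)) as [Hsmall | Hlarge].
  - assert ((1 - a) * (2 * a * y) <= (1 - a) * z) by (apply Rmult_le_compat_l; lra).
    assert (a * a * z <= a * a * (2 * a)) by (apply Rmult_le_compat_l; nra).
    nra.
  - assert (a * (1 - a) * (1 - y) >= 0) by (apply Rle_ge, Rmult_le_pos; nra).
    assert ((1 - 2 * a) * (1 + a) * (2 * a) <= (1 - 2 * a) * (1 + a) * z)
      by (apply Rmult_le_compat_l; nra).
    nra.
Qed.

Theorem proposition7 (a x y : R) :
  (sqrt 5 - 1) / 4 < a -> a < 1/2 ->
  regA1 a (x, y) -> regA2 a (G a (x, y)) ->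
  regA2 a (G a (G a (x, y))).
Proof.
  intros Ha Ha2 [[Hx Hy] Hs] [[_ Hz] Ht].
  unfold regA2, in_square, G in *; simpl in *.
  assert (Hpos : 0 < a).
  { assert (1 < sqrt 5) by (rewrite <- sqrt_1; apply sqrt_lt_1; lra). lra. }
  rewrite (tent_lt_half _ Hs) in *.
  set (z := 2 * Sfun a x y) in *.
  pose proof (Sfun_bounds a y z ltac:(lra) Hy Hz) as Ht01.
  rewrite (tent_ge_half _ Ht).
  assert (Hzy : 2 * a * y <= z) by (unfold z, Sfun in *; nra).
  pose proof (second_iterate_lower_bound a y z ltac:(lra) Hy Hzy).
  pose proof (cubic_gt_half a Ha Ha2).
  repeat split; lra.
Qed.
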